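(* Let $p<q$ be positive integers, let $\boldsymbol\alpha\in\mathbb C^p$ be a unit vector, $\boldsymbol\beta=\mathrm{FT}_p(\boldsymbol\alpha)$ and $\boldsymbol\gamma=\mathrm{FT}_q(\boldsymbol\alpha)$. Let $S\subseteq[p]$, let $0<\delta\le 1$ and $r>0$. Suppose that $\boldsymbol\beta_S$ is $\delta$-uniform and $\|\boldsymbol\beta_S\|_2^2=c$. Then if $q>\left(\frac{3200\,r\ln p}{\delta\sqrt c}\right)p$, $$\|\boldsymbol\gamma_{S'}\|_2^2\geq \frac{p}{q}\,\delta^2\left(1-\frac{1}{100r}\right)c .$$
   Context: Write $[N]=\{0,\dots,N-1\}$ and $\omega_N=e^{2\pi i/N}$. For $N\ge p$, $\mathrm{FT}_N(\boldsymbol\alpha)=\sum_{c=0}^{N-1}\left(\frac{1}{\sqrt N}\sum_{i=0}^{p-1}\omega_N^{ic}\alpha_i\right)|c\rangle\in\mathbb C^N$. Write $\boldsymbol\beta=(\beta_i)_{i\in[p]}$, $\boldsymbol\gamma=(\gamma_i)_{i\in[q]}$. For $i\in[p]$, $i'=\lfloor\frac qp i\rfloor$, and $S'=\{s':s\in S\}\subseteq[q]$. For a vector $\boldsymbol\zeta$ and an index set $T$, $\boldsymbol\zeta_T$ is the vector agreeing with $\boldsymbol\zeta$ on indices in $T$ and zero elsewhere. $\|\cdot\|_2$ is the Euclidean norm. A vector $\boldsymbol\zeta$ is $\delta$-uniform if for all $i,j$ with $\zeta_i,\zeta_j$ both nonzero, $\delta\le |\zeta_i|/|\zeta_j|\le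 1/\delta$. *)

From Stdlib Require Import Reals Lra Lia List.
From Coquelicot Require Import Coquelicot.
Open Scope R_scope.

Fixpoint csum (f : nat -> C) (n : nat) : C :=
  match n with
  | O => RtoC 0
  | S m => Cplus (csum f m) (f m)
  end.

Fixpoint rsum (f : nat -> R) (n : nat) : R :=
  match n with
  | O => 0
  | S m => rsum f m + f m
  end.

Definition omega_pow (N k : nat) : C :=
  (cos (2 * PI * INR k / INR N), sin (2 * PI * INR k / INR N)).

(* FT_N(alpha), alpha in C^p (entries alpha 0 .. alpha (p-1)), result in C^N:
   component c equals (1/sqrt N) sum_{i<p} omega_N^{i c} alpha_i. *)
Definition FT (p N : nat) (alpha : nat -> C) : nat -> C :=
  fun c => Cmult (RtoC (/ sqrt (INR N)))
                 (csum (fun i => Cmult (omega_pow N (i * c)) (alpha i)) p).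

Definition restrict (zeta : nat -> C) (T : nat -> bool) : nat -> C :=
  fun i => if T i then zeta i else RtoC 0.

Definition norm2 (n : nat) (zeta : nat -> C) : R :=
  sqrt (rsum (fun i => (Cmod (zeta i)) ^ 2) n).

Definition delta_uniform (n : nat) (delta : R) (zeta : nat -> C) : Prop :=
  forall i j, (i < n)%nat -> (j < n)%nat ->
    zeta i <> RtoC 0 -> zeta j <> RtoC 0 ->
    delta <= Cmod (zeta i) / Cmod (zeta j) <= / delta.

Definition prime_idx (p q i : nat) : nat := (q * i / p)%nat.

Definition image_set (p q : nat) (S : nat -> bool) : nat -> bool :=
  fun j => existsb (fun i => andb (S i) (Nat.eqb j (prime_idx p q i))) (seq 0 p).

From Stdlib Require Import Reals Lra Lia List.
From Coquelicot Require Import Coquelicot.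
Open Scope R_scope.

(* Write q i = p i' + m_i with 0 <= m_i < p.  Then gamma_{i'} is sqrt (p/q) times
   entry i of the p-point transform of alpha modulated by e^{-2 pi i k m_i / (p q)},
   while beta_i is the unmodulated transform.  Raising the modulation index by one
   moves the whole p-point transform by at most 2 pi / q in l^2 (Parseval, since
   |e^{-2 pi i k / (p q)} - 1| <= 2 pi / q for k < p), so telescoping over m_i < p puts
   the rescaled (gamma_{i'})_{i in S} within 2 pi (p - 1) / q <= sqrt c / (200 r) of
   beta_S.  A reverse triangle inequality and the injectivity of i |-> i' then give
   |gamma_{S'}|^2 >= (p/q) (1 - 1/(100 r)) c. *)

Lemma rsum_ext f g n : (forall i, (i < n)%nat -> f i = g i) -> rsum f n = rsum g n.
Proof.
  induction n as [|n IH]; intros Hfg; simpl; [reflexivity|].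
  rewrite IH by (intros; apply Hfg; lia). rewrite Hfg by lia. reflexivity.
Qed.

Lemma rsum_le f g n : (forall i, (i < n)%nat -> f i <= g i) -> rsum f n <= rsum g n.
Proof.
  induction n as [|n IH]; intros Hfg; simpl; [lra|].
  assert (rsum f n <= rsum g n) by (apply IH; intros; apply Hfg; lia).
  assert (f n <= g n) by (apply Hfg; lia). lra.
Qed.

Lemma rsum_nonneg f n : (forall i, (i < n)%nat -> 0 <= f i) -> 0 <= rsum f n.
Proof.
  induction n as [|n IH]; intros Hf; simpl; [lra|].
  assert (0 <= rsum f n) by (apply IH; intros; apply Hf; lia).
  assert (0 <= f n) by (apply Hf; lia). lra.
Qed.

Lemma rsum_le_prefix f m n : (forall i, 0 <= f i) -> (m <= n)%nat -> rsum f m <= rsum f n.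
Proof.
  intros Hf Hmn. induction Hmn as [|n _ IH]; simpl; [lra|].
  specialize (Hf n). lra.
Qed.

Lemma rsum_plus f g n : rsum (fun i => f i + g i) n = rsum f n + rsum g n.
Proof. induction n as [|n IH]; simpl; [lra|]. rewrite IH. lra. Qed.

Lemma rsum_minus f g n : rsum (fun i => f i - g i) n = rsum f n - rsum g n.
Proof. induction n as [|n IH]; simpl; [lra|]. rewrite IH. lra. Qed.

Lemma rsum_scal a f n : rsum (fun i => a * f i) n = a * rsum f n.
Proof. induction n as [|n IH]; simpl; [lra|]. rewrite IH. lra. Qed.

Lemma rsum_const a n : rsum (fun _ => a) n = INR n * a.
Proof. induction n as [|n IH]; [simpl; lra|]. rewrite S_INR. cbn [rsum]. rewrite IH. lra. Qed.

Lemma rsum_swap (f : nat -> nat -> R) n m :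
  rsum (fun i => rsum (fun j => f i j) m) n = rsum (fun j => rsum (fun i => f i j) n) m.
Proof.
  induction n as [|n IH]; simpl.
  - rewrite rsum_const. ring.
  - rewrite IH, <- rsum_plus. reflexivity.
Qed.

Lemma rsum_sqr_le x n : rsum x n ^ 2 <= INR n * rsum (fun i => x i ^ 2) n.
Proof.
  induction n as [|n IH]; [simpl; lra|].
  rewrite S_INR. cbn [rsum].
  set (s := rsum x n) in *. set (t := rsum (fun i => x i ^ 2) n) in *.
  assert (Ht : 0 <= t) by (apply rsum_nonneg; intros; apply pow2_ge_0).
  destruct (Req_dec (INR n) 0) as [Hn | Hn].
  - rewrite Hn in IH |- *. rewrite Rmult_0_l in IH.
    assert (s = 0) as -> by (apply Rsqr_0_uniq; unfold Rsqr; nra). nra.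
  - assert (Hn' : 0 < INR n) by (pose proof (pos_INR n); lra).
    (* AM-GM: [2 n s x <= s^2 + n^2 x^2 <= n (t + n x^2)] *)
    assert (2 * s * x n <= t + INR n * x n ^ 2).
    { pose proof (pow2_ge_0 (s - INR n * x n)).
      apply (Rmult_le_reg_l (INR n)); nra. }
    nra.
Qed.

Lemma csum_ext f g n : (forall i, (i < n)%nat -> f i = g i) -> csum f n = csum g n.
Proof.
  induction n as [|n IH]; intros Hfg; simpl; [reflexivity|].
  rewrite IH by (intros; apply Hfg; lia). rewrite Hfg by lia. reflexivity.
Qed.

Lemma csum_plus f g n : csum (fun i => f i + g i)%C n = (csum f n + csum g n)%C.
Proof. induction n as [|n IH]; simpl; [|rewrite IH]; ring. Qed.

Lemma csum_minus f g n : csum (fun i => f i - g i)%C n = (csum f n - csum g n)%C.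
Proof. induction n as [|n IH]; simpl; [|rewrite IH]; ring. Qed.

Lemma csum_scal a f n : csum (fun i => a * f i)%C n = (a * csum f n)%C.
Proof. induction n as [|n IH]; simpl; [|rewrite IH]; ring. Qed.

Lemma csum_scal_r a f n : csum (fun i => f i * a)%C n = (csum f n * a)%C.
Proof. induction n as [|n IH]; simpl; [|rewrite IH]; ring. Qed.

Lemma csum_conj f n : Cconj (csum f n) = csum (fun i => Cconj (f i)) n.
Proof.
  induction n as [|n IH]; simpl; [|rewrite <- IH];
    apply injective_projections; simpl; lra.
Qed.

Lemma csum_RtoC f n : RtoC (rsum f n) = csum (fun i => RtoC (f i)) n.
Proof. induction n as [|n IH]; simpl; [reflexivity|]. rewrite <- IH, RtoC_plus. reflexivity. Qed.

Lemma csum_swap (f : nat -> nat -> C) n m :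
  csum (fun i => csum (fun j => f i j) m) n = csum (fun j => csum (fun i => f i j) n) m.
Proof.
  induction n as [|n IH]; simpl.
  - induction m as [|m IHm]; simpl; [reflexivity|]. rewrite <- IHm. ring.
  - rewrite IH, <- csum_plus. reflexivity.
Qed.

Lemma csum_mult f g n m :
  (csum f n * csum g m)%C = csum (fun k => csum (fun l => f k * g l) m)%C n.
Proof.
  rewrite <- csum_scal_r. apply csum_ext. intros. rewrite <- csum_scal. reflexivity.
Qed.

Lemma csum_indicator (f : nat -> C) k n : (k < n)%nat ->
  csum (fun l => if Nat.eqb k l then f l else RtoC 0) n = f k.
Proof.
  induction n as [|n IH]; intros Hk; [lia|]. simpl.
  destruct (Nat.eqb_spec k n) as [-> | Hne].
  - rewrite (csum_ext _ (fun _ => RtoC 0)).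
    + rewrite <- (csum_RtoC (fun _ => 0)), (rsum_const 0 n), Rmult_0_r. ring.
    + intros i Hi. destruct (Nat.eqb_spec n i); [lia | reflexivity].
  - rewrite IH by lia. ring.
Qed.

Lemma csum_telescope (f : nat -> C) n : csum (fun j => f (S j) - f j)%C n = (f n - f O)%C.
Proof. induction n as [|n IH]; simpl; [|rewrite IH]; ring. Qed.

Lemma Cmod_csum_le f n : Cmod (csum f n) <= rsum (fun i => Cmod (f i)) n.
Proof.
  induction n as [|n IH]; simpl; [rewrite Cmod_0; lra|].
  eapply Rle_trans; [apply Cmod_triangle | lra].
Qed.
Definition E (x : R) : C := (cos (2 * PI * x), sin (2 * PI * x)).

Lemma E_add x y : (E x * E y)%C = E (x + y).
Proof.
  unfold E, Cmult; simpl. rewrite Rmult_plus_distr_l, cos_plus, sin_plus.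
  apply injective_projections; simpl; ring.
Qed.

Lemma E_conj x : Cconj (E x) = E (- x).
Proof.
  unfold E, Cconj; simpl. rewrite Ropp_mult_distr_r_reverse, cos_neg, sin_neg.
  reflexivity.
Qed.

Lemma Cmod_E x : Cmod (E x) = 1.
Proof.
  unfold Cmod, E; simpl.
  pose proof (sin2_cos2 (2 * PI * x)) as H. unfold Rsqr in H.
  replace (_ + _) with 1 by lra. apply sqrt_1.
Qed.

Lemma E_0 : E 0 = RtoC 1.
Proof. unfold E. rewrite Rmult_0_r, cos_0, sin_0. reflexivity. Qed.

Lemma E_INR n : E (INR n) = RtoC 1.
Proof.
  unfold E. replace (2 * PI * INR n) with (0 + 2 * INR n * PI) by ring.
  rewrite cos_period, sin_period, cos_0, sin_0. reflexivity.
Qed.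

Lemma E_INR_sub k l : E (INR k - INR l) = RtoC 1.
Proof.
  unfold Rminus. rewrite <- E_add, <- E_conj, !E_INR.
  apply injective_projections; simpl; lra.
Qed.

Lemma E_neq_1 x : -1 < x < 1 -> x <> 0 -> E x <> RtoC 1.
Proof.
  intros Hx Hx0 HE.
  assert (Hsin : sin (2 * PI * x) = 0) by exact (f_equal snd HE).
  assert (Hcos : cos (2 * PI * x) = 1) by exact (f_equal fst HE).
  pose proof PI_RGT_0.
  destruct (sin_eq_0_0 _ Hsin) as [k Hk].
  assert (Hkx : IZR k = 2 * x) by (apply (Rmult_eq_reg_r PI); lra).
  assert (k = 1%Z \/ k = (-1)%Z) as [-> | ->].
  { assert (Hlt : (-2 < k < 2)%Z) by (split; apply lt_IZR; lra).
    assert (k <> 0%Z) by (intros ->; lra). lia. }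
  all: rewrite Hk in Hcos.
  - rewrite Rmult_1_l, cos_PI in Hcos. lra.
  - replace (IZR (-1) * PI) with (- PI) in Hcos by ring.
    rewrite cos_neg, cos_PI in Hcos. lra.
Qed.

Lemma E_geometric_sum x n :
  ((E x - RtoC 1) * csum (fun i => E (x * INR i)) n)%C = (E (x * INR n) - RtoC 1)%C.
Proof.
  induction n as [|n IH]; simpl csum.
  - rewrite Rmult_0_r, E_0. ring.
  - rewrite Cmult_plus_distr_l, IH, S_INR, Rmult_plus_distr_l, Rmult_1_r, <- E_add.
    ring.
Qed.

Lemma E_orthogonal p k l : (0 < p)%nat -> (k < p)%nat -> (l < p)%nat ->
  csum (fun i => E (INR k * INR i / INR p) * Cconj (E (INR l * INR i / INR p)))%C p
  = if Nat.eqb k l then RtoC (INR p) else RtoC 0.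
Proof.
  intros Hp Hk Hl.
  assert (HP : 0 < INR p) by (apply lt_0_INR; lia).
  set (x := (INR k - INR l) / INR p).
  rewrite (csum_ext _ (fun i => E (x * INR i))).
  2:{ intros i _. rewrite E_conj, E_add. f_equal. unfold x. field. lra. }
  destruct (Nat.eqb_spec k l) as [<- | Hkl].
  - rewrite (csum_ext _ (fun _ => RtoC 1)).
    + rewrite <- (csum_RtoC (fun _ => 1)), rsum_const, Rmult_1_r. reflexivity.
    + intros i _. unfold x. rewrite Rminus_diag, Rdiv_0_l, Rmult_0_l. apply E_0.
  - assert (Hx : -1 < x < 1 /\ x <> 0).
    { apply lt_INR in Hk, Hl. pose proof (pos_INR k). pose proof (pos_INR l).
      assert (Hxp : x * INR p = INR k - INR l) by (unfold x; field; lra).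
      assert (INR k <> INR l) by (intros Heq; apply Hkl, INR_eq, Heq).
      split; [split|]; [nra | nra | intros Hx0; rewrite Hx0 in Hxp; lra]. }
    assert (Hne : (E x - RtoC 1)%C <> RtoC 0).
    { intros H0. apply (E_neq_1 x); try apply Hx.
      replace (E x) with ((E x - RtoC 1) + RtoC 1)%C by ring. rewrite H0. ring. }
    pose proof (E_geometric_sum x p) as Hgeom.
    replace (x * INR p) with (INR k - INR l) in Hgeom by (unfold x; field; lra).
    rewrite E_INR_sub in Hgeom.
    rewrite <- (Cmult_1_l (csum _ _)), <- (Cinv_l _ Hne), <- Cmult_assoc, Hgeom.
    ring.
Qed.

Definition dft (p : nat) (a : nat -> C) (i : nat) : C :=
  csum (fun k => E (INR k * INR i / INR p) * a k)%C p.

Lemma dft_minus p a b i : dft p (fun k => a k - b k)%C i = (dft p a i - dft p b i)%C.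
Proof.
  unfold dft. rewrite <- csum_minus. apply csum_ext. intros k _. ring.
Qed.

Lemma dft_Parseval p a : (0 < p)%nat ->
  rsum (fun i => Cmod (dft p a i) ^ 2) p = INR p * rsum (fun k => Cmod (a k) ^ 2) p.
Proof.
  intros Hp. apply (f_equal fst (x := RtoC _) (y := RtoC _)).
  rewrite RtoC_mult, !csum_RtoC, <- csum_scal.
  transitivity (csum (fun i => csum (fun k => csum (fun l => a k * Cconj (a l) *
     (E (INR k * INR i / INR p) * Cconj (E (INR l * INR i / INR p)))) p) p) p)%C.
  - apply csum_ext. intros i _.
    rewrite Cmod2_conj. unfold dft. rewrite csum_conj, csum_mult.
    apply csum_ext. intros k _. apply csum_ext. intros l _.
    rewrite Cmult_conj. ring.
  - rewrite csum_swap. apply csum_ext. intros k Hk. rewrite csum_swap.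
    rewrite (csum_ext _ (fun l => if Nat.eqb k l then a l * Cconj (a l) * RtoC (INR p)
                                   else RtoC 0)%C).
    + rewrite csum_indicator, Cmod2_conj by exact Hk. ring.
    + intros l Hl. rewrite csum_scal, E_orthogonal by assumption.
      destruct (Nat.eqb_spec k l) as [-> | _]; ring.
Qed.

Lemma sin_sqr_le y : sin y ^ 2 <= y ^ 2.
Proof.
  assert (Hpos : forall z, 0 < z -> - z <= sin z <= z).
  { intros z Hz. split; [|apply Rlt_le, sin_lt_x, Hz].
    pose proof (SIN_bound z). pose proof PI2_1.
    destruct (Rlt_le_dec z 1); [|lra].
    assert (0 < sin z) by (apply sin_gt_0; lra). lra. }
  destruct (Rtotal_order y 0) as [Hy | [-> | Hy]].
  - specialize (Hpos (- y) ltac:(lra)). rewrite sin_neg in Hpos. nra.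
  - rewrite sin_0. lra.
  - specialize (Hpos y Hy). nra.
Qed.

Lemma Cmod_E_sub_1_le x : Cmod (E x - RtoC 1)%C <= 2 * PI * Rabs x.
Proof.
  pose proof PI_RGT_0.
  replace (2 * PI * Rabs x) with (Rabs (2 * PI * x))
    by (rewrite Rabs_mult, (Rabs_right (2 * PI)) by lra; reflexivity).
  set (y := 2 * PI * x).
  unfold Cmod, E; simpl. fold y. rewrite <- sqrt_Rsqr_abs. apply sqrt_le_1_alt.
  (* [|e^{iy} - 1|^2 = 4 sin^2 (y/2)] *)
  replace y with (2 * (y / 2)) by field.
  rewrite cos_2a_sin, sin_2a.
  pose proof (sin_sqr_le (y / 2)). pose proof (sin2_cos2 (y / 2)). unfold Rsqr in *.
  replace (2 * (y / 2)) with y by field. nra.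
Qed.

Definition modulate (theta : R) (a : nat -> C) (k : nat) : C := (E (- theta * INR k) * a k)%C.

Lemma Cmod_modulate_sub_le theta theta' a k :
  Cmod (modulate theta' a k - modulate theta a k)%C
  <= 2 * PI * Rabs (theta' - theta) * INR k * Cmod (a k).
Proof.
  unfold modulate.
  replace (E (- theta' * INR k))
    with (E (- theta * INR k) * E (- (theta' - theta) * INR k))%C
    by (rewrite E_add; f_equal; ring).
  replace (E (- theta * INR k) * E (- (theta' - theta) * INR k) * a k
           - E (- theta * INR k) * a k)%C
    with (E (- theta * INR k) * (E (- (theta' - theta) * INR k) - RtoC 1) * a k)%C
    by ring.
  rewrite !Cmod_mult, Cmod_E, Rmult_1_l.
  apply Rmult_le_compat_r; [apply Cmod_ge_0|].
  eapply Rle_trans; [apply Cmod_E_sub_1_le|].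
  rewrite Rabs_mult, Rabs_Ropp, (Rabs_right (INR k)) by (apply Rle_ge, pos_INR).
  apply Req_le. ring.
Qed.

Lemma Cmod_sqr_scal (a : R) z : Cmod (RtoC a * z)%C ^ 2 = a ^ 2 * Cmod z ^ 2.
Proof. rewrite Cmod_mult, Cmod_R, Rpow_mult_distr, pow2_abs. reflexivity. Qed.

Definition twisted_FT (p q : nat) (alpha : nat -> C) (m i : nat) : C :=
  (RtoC (/ sqrt (INR p)) * dft p (modulate (INR m / (INR p * INR q)) alpha) i)%C.

Lemma omega_pow_E N n : omega_pow N n = E (INR n / INR N).
Proof. unfold omega_pow, E. f_equal; f_equal; unfold Rdiv; ring. Qed.

Lemma FT_eq_twisted_FT_0 p q alpha i : FT p p alpha i = twisted_FT p q alpha 0 i.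
Proof.
  unfold FT, twisted_FT, dft, modulate. f_equal. apply csum_ext. intros k _.
  rewrite omega_pow_E, mult_INR, INR_0, Rdiv_0_l, Ropp_0, Rmult_0_l, E_0, Cmult_1_l.
  reflexivity.
Qed.

(* [q i = p i' + (q i mod p)] turns [k i' / q] into [k i / p - k (q i mod p) / (p q)]. *)
Lemma FT_prime_idx p q alpha i : (0 < p)%nat -> (0 < q)%nat ->
  FT p q alpha (prime_idx p q i)
  = (RtoC (sqrt (INR p / INR q)) * twisted_FT p q alpha ((q * i) mod p) i)%C.
Proof.
  intros Hp Hq.
  assert (HP : 0 < INR p) by (apply lt_0_INR; lia).
  assert (HQ : 0 < INR q) by (apply lt_0_INR; lia).
  assert (HsP : 0 < sqrt (INR p)) by (apply sqrt_lt_R0, HP).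
  assert (HsQ : 0 < sqrt (INR q)) by (apply sqrt_lt_R0, HQ).
  unfold FT, twisted_FT, dft, modulate.
  rewrite Cmult_assoc, <- RtoC_mult, sqrt_div_alt by exact HQ.
  replace (sqrt (INR p) / sqrt (INR q) * / sqrt (INR p)) with (/ sqrt (INR q))
    by (field; lra).
  f_equal. apply csum_ext. intros k _.
  rewrite Cmult_assoc, E_add, omega_pow_E. do 2 f_equal.
  pose proof (Nat.div_mod_eq (q * i) p) as Hdiv. apply (f_equal INR) in Hdiv.
  rewrite plus_INR, !mult_INR in Hdiv.
  unfold prime_idx. rewrite !mult_INR.
  replace (INR ((q * i) mod p)) with (INR q * INR i - INR p * INR (q * i / p)) by lra.
  field. lra.
Qed.

Lemma twisted_FT_sub p q alpha m m' i :
  (twisted_FT p q alpha m' i - twisted_FT p q alpha m i)%C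
  = (RtoC (/ sqrt (INR p)) * dft p (fun k => modulate (INR m' / (INR p * INR q)) alpha k
                                   - modulate (INR m / (INR p * INR q)) alpha k) i)%C.
Proof. unfold twisted_FT. rewrite dft_minus. ring. Qed.

Lemma twisted_FT_step p q alpha m : (0 < p)%nat -> (0 < q)%nat ->
  rsum (fun i => Cmod (twisted_FT p q alpha (S m) i - twisted_FT p q alpha m i)%C ^ 2) p
  <= (2 * PI / INR q) ^ 2 * rsum (fun k => Cmod (alpha k) ^ 2) p.
Proof.
  intros Hp Hq.
  assert (HP : 0 < INR p) by (apply lt_0_INR; lia).
  assert (HQ : 0 < INR q) by (apply lt_0_INR; lia).
  pose proof PI_RGT_0.
  set (d := fun k => (modulate (INR (S m) / (INR p * INR q)) alpha k
                      - modulate (INR m / (INR p * INR q)) alpha k)%C).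
  rewrite (rsum_ext _ (fun i => / INR p * Cmod (dft p d i) ^ 2)).
  2:{ intros i _.
      rewrite twisted_FT_sub, Cmod_sqr_scal, pow_inv, pow2_sqrt by lra.
      reflexivity. }
  rewrite rsum_scal, dft_Parseval by exact Hp.
  rewrite <- Rmult_assoc, Rinv_l, Rmult_1_l by lra.
  rewrite <- rsum_scal. apply rsum_le. intros k Hk. unfold d.
  rewrite <- Rpow_mult_distr. apply pow_incr. split; [apply Cmod_ge_0|].
  eapply Rle_trans; [apply Cmod_modulate_sub_le|].
  apply Rmult_le_compat_r; [apply Cmod_ge_0|].
  rewrite S_INR.
  replace ((INR m + 1) / (INR p * INR q) - INR m / (INR p * INR q))
    with (/ (INR p * INR q)) by (field; lra).
  rewrite Rabs_right by (apply Rle_ge, Rlt_le, Rinv_0_lt_compat; nra).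
  apply lt_INR in Hk.
  replace (2 * PI * / (INR p * INR q) * INR k) with (2 * PI / INR q * (INR k / INR p))
    by (field; lra).
  rewrite <- (Rmult_1_r (2 * PI / INR q)) at 2.
  apply Rmult_le_compat_l; [apply Rlt_le, Rdiv_lt_0_compat; lra|].
  unfold Rdiv. rewrite <- (Rinv_r (INR p)) by lra.
  apply Rmult_le_compat_r; [apply Rlt_le, Rinv_0_lt_compat|]; lra.
Qed.

Lemma rsum_telescope_sqr_le (v : nat -> nat -> C) (m : nat -> nat) n M eps2 :
  (forall j, (j < M)%nat -> rsum (fun i => Cmod (v (S j) i - v j i)%C ^ 2) n <= eps2) ->
  (forall i, (i < n)%nat -> (m i <= M)%nat) ->
  rsum (fun i => Cmod (v (m i) i - v O i)%C ^ 2) n <= INR M ^ 2 * eps2.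
Proof.
  intros Hstep Hm.
  set (d := fun i j => Cmod (v (S j) i - v j i)%C).
  assert (Hd : forall i j, 0 <= d i j ^ 2) by (intros; apply pow2_ge_0).
  apply Rle_trans with (rsum (fun i => INR M * rsum (fun j => d i j ^ 2) M) n).
  - apply rsum_le. intros i Hi.
    pose proof (csum_telescope (fun j => v j i) (m i)) as Htel. cbv beta in Htel.
    rewrite <- Htel.
    assert (Hmi : INR (m i) <= INR M) by (apply le_INR, Hm, Hi).
    apply Rle_trans with (rsum (fun j => d i j) (m i) ^ 2).
    { apply pow_incr. split; [apply Cmod_ge_0 | apply Cmod_csum_le]. }
    eapply Rle_trans; [apply rsum_sqr_le|].
    apply Rmult_le_compat; [apply pos_INR | apply rsum_nonneg; auto | exact Hmi |].
    apply rsum_le_prefix; auto.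
  - rewrite rsum_scal, rsum_swap.
    replace (INR M ^ 2 * eps2) with (INR M * rsum (fun _ => eps2) M)
      by (rewrite rsum_const; ring).
    apply Rmult_le_compat_l; [apply pos_INR|].
    apply rsum_le. exact Hstep.
Qed.

Lemma twisted_FT_drift p q alpha m : (0 < p)%nat -> (0 < q)%nat ->
  (forall i, (i < p)%nat -> (m i < p)%nat) ->
  rsum (fun i => Cmod (twisted_FT p q alpha (m i) i - twisted_FT p q alpha 0 i)%C ^ 2) p
  <= (INR (p - 1) * (2 * PI / INR q)) ^ 2 * rsum (fun k => Cmod (alpha k) ^ 2) p.
Proof.
  intros Hp Hq Hm.
  rewrite Rpow_mult_distr, Rmult_assoc.
  apply (rsum_telescope_sqr_le (twisted_FT p q alpha)).
  - intros j _. apply twisted_FT_step; assumption.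
  - intros i Hi. specialize (Hm i Hi). lia.
Qed.

Lemma prime_idx_lt_succ p q i : (0 < p)%nat -> (p <= q)%nat ->
  (prime_idx p q i < prime_idx p q (S i))%nat.
Proof.
  intros Hp Hpq. unfold prime_idx.
  assert (Hle : ((q * i + 1 * p) / p <= q * S i / p)%nat) by (apply Nat.Div0.div_le_mono; lia).
  rewrite Nat.div_add in Hle by lia. lia.
Qed.

Lemma prime_idx_lt p q i : (0 < q)%nat -> (i < p)%nat -> (prime_idx p q i < q)%nat.
Proof. intros Hq Hi. unfold prime_idx. apply Nat.Div0.div_lt_upper_bound. nia. Qed.

Lemma image_set_prime_idx p q S i : (i < p)%nat -> S i = true ->
  image_set p q S (prime_idx p q i) = true.
Proof.
  intros Hi HS. unfold image_set. apply existsb_exists. exists i.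
  rewrite in_seq, HS, Nat.eqb_refl. split; [lia | reflexivity].
Qed.

Lemma rsum_reindex_le (F : nat -> R) (phi : nat -> nat) n N :
  (forall j, 0 <= F j) -> (forall i, (phi i < phi (S i))%nat) ->
  (forall i, (i < n)%nat -> (phi i < N)%nat) ->
  rsum (fun i => F (phi i)) n <= rsum F N.
Proof.
  intros HF Hphi.
  assert (Hmono : forall i j, (i < j)%nat -> (phi i < phi j)%nat).
  { intros i j Hij. induction Hij as [|j _ IH]; [apply Hphi|].
    specialize (Hphi j). lia. }
  revert N. induction n as [|n IH]; intros N HN; cbn [rsum].
  - apply rsum_nonneg. auto.
  - apply Rle_trans with (rsum F (phi n) + F (phi n)).
    + apply Rplus_le_compat_r, IH. intros i Hi. apply Hmono, Hi.
    + apply (rsum_le_prefix F (S (phi n))); [exact HF | apply HN; lia].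
Qed.

Lemma norm2_sqr n zeta : norm2 n zeta ^ 2 = rsum (fun i => Cmod (zeta i) ^ 2) n.
Proof. apply pow2_sqrt, rsum_nonneg. intros. apply pow2_ge_0. Qed.

Lemma norm2_image_set_ge p q alpha S : (0 < p)%nat -> (p <= q)%nat ->
  INR p / INR q
    * rsum (fun i => Cmod (restrict (fun i => twisted_FT p q alpha ((q * i) mod p) i) S i) ^ 2) p
  <= norm2 q (restrict (FT p q alpha) (image_set p q S)) ^ 2.
Proof.
  intros Hp Hpq.
  assert (Hpq0 : 0 <= INR p / INR q)
    by (apply Rlt_le, Rdiv_lt_0_compat; apply lt_0_INR; lia).
  rewrite norm2_sqr, <- rsum_scal.
  eapply Rle_trans;
    [| apply (rsum_reindex_le (fun j => Cmod (restrict (FT p q alpha) (image_set p q S) j) ^ 2)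
                (prime_idx p q))].
  - apply rsum_le. intros i Hi. unfold restrict. destruct (S i) eqn:HS.
    + rewrite image_set_prime_idx, FT_prime_idx, Cmod_sqr_scal, pow2_sqrt by (assumption || lia).
      apply Rle_refl.
    + rewrite Cmod_0. replace (INR p / INR q * 0 ^ 2) with 0 by ring. apply pow2_ge_0.
  - intros. apply pow2_ge_0.
  - intros. apply prime_idx_lt_succ; assumption.
  - intros. apply prime_idx_lt; lia.
Qed.

Lemma Cmod_sqr_perturb (a b : C) t : 0 < t ->
  (1 - t) * Cmod b ^ 2 - (1 / t - 1) * Cmod (a - b)%C ^ 2 <= Cmod a ^ 2.
Proof.
  intros Ht.
  set (x := Cmod b). set (y := Cmod (a - b)%C). set (z := Cmod a).
  assert (Hx : x <= z + y).
  { unfold x, y, z. replace b with (a + - (a - b))%C at 1 by ring.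
    rewrite <- (Cmod_opp (a - b)). apply Cmod_triangle. }
  assert (Hy : y <= z + x).
  { unfold x, y, z. rewrite <- (Cmod_opp b). apply Cmod_triangle. }
  assert (Hz : 0 <= z) by apply Cmod_ge_0.
  assert (Hxy : (x - y) ^ 2 <= z ^ 2) by nra.
  (* [(x - y)^2 - ((1 - t) x^2 - (1/t - 1) y^2) = (t x - y)^2 / t] *)
  assert (Hsq : 0 <= (t * x - y) ^ 2 / t)
    by (apply Rdiv_le_0_compat; [apply pow2_ge_0 | exact Ht]).
  replace ((t * x - y) ^ 2 / t) with ((x - y) ^ 2 - ((1 - t) * x ^ 2 - (1 / t - 1) * y ^ 2))
    in Hsq by (field; lra).
  lra.
Qed.

Lemma rsum_Cmod_sqr_close_ge (u b : nat -> C) n t : 0 < t ->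
  rsum (fun i => Cmod (u i - b i)%C ^ 2) n <= t ^ 2 * rsum (fun i => Cmod (b i) ^ 2) n ->
  (1 - 2 * t) * rsum (fun i => Cmod (b i) ^ 2) n <= rsum (fun i => Cmod (u i) ^ 2) n.
Proof.
  intros Ht Hclose.
  set (B := rsum (fun i => Cmod (b i) ^ 2) n) in *.
  set (D := rsum (fun i => Cmod (u i - b i)%C ^ 2) n) in *.
  assert (HB : 0 <= B) by (apply rsum_nonneg; intros; apply pow2_ge_0).
  assert (HU : 0 <= rsum (fun i => Cmod (u i) ^ 2) n)
    by (apply rsum_nonneg; intros; apply pow2_ge_0).
  destruct (Rle_lt_dec t 1) as [Ht1 | Ht1]; [|nra].
  assert (Hsum : (1 - t) * B - (1 / t - 1) * D <= rsum (fun i => Cmod (u i) ^ 2) n).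
  { unfold B, D. rewrite <- !rsum_scal, <- rsum_minus.
    apply rsum_le. intros. apply Cmod_sqr_perturb, Ht. }
  assert (Hst : (1 / t - 1) * t = 1 - t) by (field; lra).
  assert (Hs : 0 <= 1 / t - 1) by nra.
  assert (HD : (1 / t - 1) * D <= t * (1 - t) * B).
  { replace (t * (1 - t) * B) with ((1 / t - 1) * (t ^ 2 * B)) by (field; lra).
    apply Rmult_le_compat_l; assumption. }
  nra.
Qed.

Lemma rsum_Cmod_restrict_sub_le f g T n :
  rsum (fun i => Cmod (restrict f T i - restrict g T i)%C ^ 2) n
  <= rsum (fun i => Cmod (f i - g i)%C ^ 2) n.
Proof.
  apply rsum_le. intros i _. unfold restrict. destruct (T i); [apply Rle_refl|].
  replace (RtoC 0 - RtoC 0)%C with (RtoC 0) by ring.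
  rewrite Cmod_0, pow_i by lia. apply pow2_ge_0.
Qed.

Lemma twisted_FT_restrict_ge p q alpha S t : (0 < p)%nat -> (0 < q)%nat -> 0 < t ->
  (INR (p - 1) * (2 * PI / INR q)) ^ 2 * rsum (fun k => Cmod (alpha k) ^ 2) p
    <= t ^ 2 * rsum (fun i => Cmod (restrict (twisted_FT p q alpha 0) S i) ^ 2) p ->
  (1 - 2 * t) * rsum (fun i => Cmod (restrict (twisted_FT p q alpha 0) S i) ^ 2) p
  <= rsum (fun i => Cmod (restrict (fun i => twisted_FT p q alpha ((q * i) mod p) i) S i) ^ 2) p.
Proof.
  intros Hp Hq Ht Hdrift.
  apply rsum_Cmod_sqr_close_ge; [exact Ht|].
  eapply Rle_trans; [apply rsum_Cmod_restrict_sub_le|].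
  eapply Rle_trans; [|exact Hdrift].
  apply twisted_FT_drift; [exact Hp | exact Hq |].
  intros. apply Nat.mod_upper_bound. lia.
Qed.

Lemma drift_le_of_large_q (p q : nat) delta r c :
  (0 < p)%nat -> 0 < INR q -> 0 < delta <= 1 -> 0 < r -> 0 < c ->
  INR q > 3200 * r * ln (INR p) / (delta * sqrt c) * INR p ->
  (INR (p - 1) * (2 * PI / INR q)) ^ 2 <= (1 / (200 * r)) ^ 2 * c.
Proof.
  intros Hp HQ Hdelta Hr Hc Hq.
  assert (Hsc : 0 < sqrt c) by (apply sqrt_lt_R0, Hc).
  assert (Hrhs : 0 < sqrt c / (200 * r)) by (apply Rdiv_lt_0_compat; lra).
  replace ((1 / (200 * r)) ^ 2 * c) with ((sqrt c / (200 * r)) ^ 2)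
    by (unfold Rdiv; rewrite Rpow_mult_distr, pow2_sqrt by lra; field; lra).
  apply pow_incr. split.
  { apply Rmult_le_pos; [apply pos_INR|].
    apply Rlt_le, Rdiv_lt_0_compat; [pose proof PI_RGT_0 |]; lra. }
  destruct (Nat.eq_dec p 1) as [-> | Hp1].
  { simpl. lra. }
  assert (Hp2 : 2 <= INR p) by (apply (le_INR 2); lia).
  rewrite minus_INR by lia. simpl (INR 1).
  assert (Hln : / 2 < ln (INR p)).
  { eapply Rlt_le_trans; [apply ln_lt_2|].
    destruct (Req_dec (INR p) 2) as [-> | Hne]; [lra|].
    apply Rlt_le, ln_increasing; lra. }
  assert (Hds : 0 < delta * sqrt c) by nra.
  assert (Hq' : 3200 * r * ln (INR p) * INR p < INR q * (delta * sqrt c)).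
  { apply (Rmult_lt_compat_r (delta * sqrt c)) in Hq; [|exact Hds].
    replace (3200 * r * ln (INR p) / (delta * sqrt c) * INR p * (delta * sqrt c))
      with (3200 * r * ln (INR p) * INR p) in Hq by (field; lra).
    lra. }
  pose proof PI_4.
  assert (H1 : 400 * PI * r * (INR p - 1) <= 1600 * r * INR p).
  { assert (0 <= r * (INR p - 1)) by nra. nra. }
  assert (H2 : 1600 * r * INR p <= 3200 * r * ln (INR p) * INR p).
  { assert (0 < r * INR p) by nra. nra. }
  assert (H3 : INR q * (delta * sqrt c) <= INR q * sqrt c).
  { assert (0 < INR q * sqrt c) by nra. nra. }
  assert (400 * PI * r * (INR p - 1) <= INR q * sqrt c) by lra.
  apply (Rmult_le_reg_r (200 * r * INR q)); [nra|].
  replace ((INR p - 1) * (2 * PI / INR q) * (200 * r * INR q))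
    with (400 * PI * r * (INR p - 1)) by (field; lra).
  replace (sqrt c / (200 * r) * (200 * r * INR q)) with (INR q * sqrt c) by (field; lra).
  assumption.
Qed.

Theorem lemma2 (p q : nat) (alpha : nat -> C) (S : nat -> bool)
    (delta r c : R) :
  (0 < p)%nat -> (p < q)%nat ->
  norm2 p alpha = 1 ->
  0 < delta -> delta <= 1 -> 0 < r ->
  delta_uniform p delta (restrict (FT p p alpha) S) ->
  (norm2 p (restrict (FT p p alpha) S)) ^ 2 = c ->
  INR q > (3200 * r * ln (INR p) / (delta * sqrt c)) * INR p ->
  (norm2 q (restrict (FT p q alpha) (image_set p q S))) ^ 2
    >= INR p / INR q * delta ^ 2 * (1 - 1 / (100 * r)) * c.
Proof.
  intros Hp Hpq Halpha Hdelta0 Hdelta1 Hr _ Hc Hq.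
  assert (HQ : 0 < INR q) by (apply lt_0_INR; lia).
  assert (Hpq0 : 0 < INR p / INR q) by (apply Rdiv_lt_0_compat; [apply lt_0_INR; lia | exact HQ]).
  assert (Hb : rsum (fun i => Cmod (restrict (twisted_FT p q alpha 0) S i) ^ 2) p = c).
  { rewrite <- Hc, norm2_sqr. apply rsum_ext. intros i _.
    unfold restrict. rewrite (FT_eq_twisted_FT_0 p q). reflexivity. }
  set (U := rsum (fun i => Cmod (restrict (fun i => twisted_FT p q alpha ((q * i) mod p) i) S i) ^ 2) p).
  assert (Hlow : INR p / INR q * U <= norm2 q (restrict (FT p q alpha) (image_set p q S)) ^ 2)
    by (apply norm2_image_set_ge; lia).
  assert (HU : 0 <= U) by (apply rsum_nonneg; intros; apply pow2_ge_0).
  destruct (Req_dec c 0) as [-> | Hc0]; [rewrite Rmult_0_r; nra|].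
  assert (Hcpos : 0 < c).
  { enough (0 <= c) by lra. rewrite <- Hb. apply rsum_nonneg. intros. apply pow2_ge_0. }
  set (t := 1 / (200 * r)).
  assert (Hu : (1 - 2 * t) * c <= U).
  { rewrite <- Hb. apply twisted_FT_restrict_ge; [lia | lia | apply Rdiv_lt_0_compat; lra |].
    rewrite Hb, <- norm2_sqr, Halpha, pow1, Rmult_1_r.
    apply (drift_le_of_large_q p q delta r c); auto. }
  replace (1 - 1 / (100 * r)) with (1 - 2 * t) by (unfold t; field; lra).
  assert (Hdelta2 : 0 < delta ^ 2 <= 1) by (split; nra).
  assert (delta ^ 2 * ((1 - 2 * t) * c) <= U)
    by (destruct (Rle_dec 0 ((1 - 2 * t) * c)); nra).
  nra.
Qed.
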